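(* Let $(G,\theta)$ be a cyclotomic $p$-oriented profinite group, let $M$ be a Hilbert 90 module for $(G,\theta)$, and fix an injective homomorphism $\iota\colon\mathbb Z/p\mathbb Z\hookrightarrow M$. Let $a,b\in M^G$ be such that $\chi_a\cup\chi_b=0$ in $H^2(G,\mathbb Z/p\mathbb Z)$. Then there exists $\alpha\in M^{G_a}$ such that $N_{G/G_a}(\alpha)=b$.
   Context: A $p$-oriented profinite group is a pair $(G,\theta)$ with $G$ profinite and $\theta\colon G\to\mathbb Z_p^\times$ continuous; it is cyclotomic if $\theta(G)\subset 1+p\mathbb Z_p$. Let $S$ be the discrete $G$-module $\mathbb Q/\mathbb Z_{(p)}$ with $g$ acting by multiplication by $\theta(g)$. A Hilbert 90 module for $(G,\theta)$ is a discrete $G$-module $M$ with $pM=M$, $M\{p\}\simeq S$ as $G$-modules, and $H^1(H,M)=0$ for every open subgroup $H\subset G$. In the cyclotomic case, the exact sequence $0\to\mathbb Z/p\mathbb Z\xrightarrow{\iota}M\xrightarrow{p}M\to0$ gives a connecting map $\partial\colon M^G\to H^1(G,\mathbb Z/p\mathbb Z)$; for $a\in M^G$ set $\chi_a=\partial(a)$ and $G_a=\ker(\chi_a)$. $N_{G/G_a}\colon M^{G_a}\to M^G$ is the norm $x\mapsto\sum_{gG_a\in G/G_a}gx$. *)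

From HB Require Import structures.
From Stdlib Require Import ClassicalEpsilon.
From mathcomp Require Import all_boot all_order all_algebra.
From mathcomp Require Import all_classical topology.
Set Implicit Arguments.
Unset Strict Implicit.
Unset Printing Implicit Defensive.
Import Order.TTheory GRing.Theory Num.Theory.
Local Open Scope classical_set_scope.
Local Open Scope ring_scope.

Record profinite_group (G : topologicalType) := ProfiniteGroup {
  gmul : G -> G -> G;
  ginv : G -> G;
  gone : G;
  gmulA : forall x y z, gmul x (gmul y z) = gmul (gmul x y) z;
  gmul1 : forall x, gmul x gone = x;
  g1mul : forall x, gmul gone x = x;
  gmulV : forall x, gmul x (ginv x) = gone;
  gVmul : forall x, gmul (ginv x) x = gone;
  gmul_cont : continuous (fun x : G * G => gmul x.1 x.2);
  ginv_cont : continuous ginv;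
  g_compact : compact [set: G];
  g_hausdorff : hausdorff_space G;
  g_totdisc : totally_disconnected [set: G] }.

Section Defs.
Variables (G : topologicalType) (Gm : profinite_group G).

(* A function on G with values in a discrete set is continuous iff it is
   locally constant (on the subset H of its domain). *)
Definition locally_const_on {T : Type} (H : set G) (f : G -> T) : Prop :=
  forall g, H g -> exists U : set G, [/\ open U, U g &
    forall h, U h -> H h -> f h = f g].

(* p-adic integers Z_p = lim Z/p^n : x n in [0, p^n) with x (n+1) = x n mod p^n *)
Definition Zp_elt (p : nat) (x : nat -> nat) : Prop :=
  forall n, (x n < p ^ n)%N /\ (x n.+1 %% p ^ n)%N = x n.
Definition Zp_mul (p : nat) (x y : nat -> nat) : nat -> nat :=
  fun n => (x n * y n %% p ^ n)%N.
Definition Zp_unit (p : nat) (x : nat -> nat) : Prop := coprime (x 1%N) p.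

(* theta : G -> Z_p^x continuous homomorphism (continuity for the inverse
   limit topology = each residue map G -> Z/p^n is locally constant). *)
Definition p_orientation (p : nat) (theta : G -> nat -> nat) : Prop :=
  [/\ forall g, Zp_elt p (theta g) /\ Zp_unit p (theta g),
      forall g h, theta (gmul Gm g h) = Zp_mul p (theta g) (theta h) &
      forall n, locally_const_on [set: G] (fun g => theta g n)].

(* cyclotomic: theta(G) in 1 + p Z_p *)
Definition cyclotomic_orientation (p : nat) (theta : G -> nat -> nat) : Prop :=
  p_orientation p theta /\ forall g, theta g 1%N = 1%N.

Definition discrete_module (M : zmodType) (act : G -> M -> M) : Prop :=
  [/\ forall g (x y : M), act g (x + y) = act g x + act g y,
      forall x, act (gone Gm) x = x,
      forall g h x, act (gmul Gm g h) x = act g (act h x) &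
      forall x, open [set g | act g x = x]].

Definition open_subgroup (H : set G) : Prop :=
  [/\ open H, H (gone Gm),
      forall g h, H g -> H h -> H (gmul Gm g h) &
      forall g, H g -> H (ginv Gm g)].

Definition H1_vanishes (M : zmodType) (act : G -> M -> M) (H : set G) : Prop :=
  forall f : G -> M, locally_const_on H f ->
    (forall g h, H g -> H h -> f (gmul Gm g h) = f g + act g (f h)) ->
    exists m : M, forall g, H g -> f g = act g m - m.

(* An isomorphism of G-modules S = Q/Z_(p) (twisted by theta) ~ M{p},
   given as an additive map phi : Q -> M with kernel exactly Z_(p),
   image exactly the p-primary torsion M{p}, and G-equivariant:
   g . phi(k/p^n) = phi(theta(g) k / p^n). *)
Definition S_iso_torsion (p : nat) (theta : G -> nat -> nat)
    (M : zmodType) (act : G -> M -> M) (phi : rat -> M) : Prop :=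
  [/\ forall q r, phi (q + r) = phi q + phi r,
      forall q, phi q = 0 <-> coprime `|denq q|%N p,
      forall m : M, (exists n, m *+ (p ^ n) = 0) <-> (exists q, phi q = m) &
      forall g (k : int) (n : nat),
        act g (phi (k%:~R / (p ^ n)%:R)) =
        phi ((k * (theta g n)%:Z)%:~R / (p ^ n)%:R)].

Definition hilbert90_module (p : nat) (theta : G -> nat -> nat)
    (M : zmodType) (act : G -> M -> M) : Prop :=
  [/\ discrete_module act,
      forall m : M, exists c : M, c *+ p = m,
      exists phi : rat -> M, S_iso_torsion p theta act phi &
      forall H, open_subgroup H -> H1_vanishes act H].

(* The connecting map  M^G -> H^1(G, Z/p) = Hom(G, Z/p)  (cyclotomic case):
   chi_a(g) = iota^{-1}(g c - c) where p c = a. *)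
Definition chi (p : nat) (M : zmodType) (act : G -> M -> M)
    (iota : 'Z_p -> M) (a : M) (g : G) : 'Z_p :=
  epsilon (inhabits 0) (fun z => exists c : M, c *+ p = a /\ iota z = act g c - c).

Definition ker_chi (p : nat) (M : zmodType) (act : G -> M -> M)
    (iota : 'Z_p -> M) (a : M) : set G :=
  [set g | chi act iota a g = 0].

(* x ∪ y = 0 in H^2(G, Z/p) (trivial action, continuous cochains):
   the 2-cocycle (g,h) |-> x(g) y(h) is a coboundary of a continuous
   1-cochain f, i.e. x(g) y(h) = f(g) + f(h) - f(gh). *)
Definition cup_vanishes (p : nat) (x y : G -> 'Z_p) : Prop :=
  exists f : G -> 'Z_p, locally_const_on [set: G] f /\
    forall g h, x g * y h = f g + f h - f (gmul Gm g h).

(* N_{G/K}(alpha) = b : the sum of g.alpha over a set of representatives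
   R of the left cosets gK equals b. *)
Definition norm_equals (M : zmodType) (act : G -> M -> M) (K : set G)
    (alpha b : M) : Prop :=
  exists (n : nat) (R : 'I_n -> G),
    (forall g, exists! i, K (gmul Gm (ginv Gm (R i)) g)) /\
    \sum_(i < n) act (R i) alpha = b.

End Defs.

From Stdlib Require Import ClassicalEpsilon.
From mathcomp Require Import all_boot all_order all_algebra.
From mathcomp Require Import all_classical topology.
From mathcomp Require Import ring.
Import GRing.Theory Num.Theory.
Set Implicit Arguments.
Unset Strict Implicit.
Local Open Scope classical_set_scope.
Local Open Scope ring_scope.

(* Write a = c *+ p and b = d *+ p, so that iota (chi_a g) = g c - c, and let f
   trivialise chi_a \cup chi_b.  The cochain
     E g = d *+ [chi_a g] + iota (chi_a g * chi_b g + f g)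
   satisfies E (g h) + b *+ carry = g E h + E g, where carry is the carry in the
   addition [chi_a g] + [chi_a h] of representatives in [0, p).  On K = ker chi_a
   there is no carry, so E is a crossed homomorphism there and Hilbert 90 for K
   makes it a coboundary; subtracting that coboundary, E vanishes on K.  If
   chi_a s = 1, then alpha := E s is K-invariant, and the relation telescopes
   along s, s^2, ..., s^p, with s^p in K and a carry only at the last step, into
   \sum_(i < p) s^i alpha = b.  If chi_a = 0, alpha := b works. *)

Section AdditiveFunctions.
Variables (A B : zmodType) (f : A -> B).
Hypothesis fD : forall x y, f (x + y) = f x + f y.

Lemma additive0 : f 0 = 0.
Proof. by apply: (@addrI _ (f 0)); rewrite -fD !addr0. Qed.

Lemma additiveB x y : f (x - y) = f x - f y.
Proof. by apply: (@addIr _ (f y)); rewrite -fD !subrK. Qed.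

Lemma additiveMn x n : f (x *+ n) = f x *+ n.
Proof. by elim: n => [|n IH]; rewrite ?mulr0n ?additive0 // !mulrS fD IH. Qed.

Lemma additive_sum (I : Type) (r : seq I) (F : I -> A) :
  f (\sum_(i <- r) F i) = \sum_(i <- r) f (F i).
Proof. by elim: r => [|i r IH]; rewrite ?big_nil ?additive0 // !big_cons fD IH. Qed.

End AdditiveFunctions.

Lemma additive_Zp_ptorsion (p : nat) (M : zmodType) (f : 'Z_p -> M) :
  (1 < p)%N -> (forall x y, f (x + y) = f x + f y) -> forall z, f z *+ p = 0.
Proof.
by move=> p_gt1 fD z; rewrite -(additiveMn fD) -mulr_natr pchar_Zp // mulr0 additive0.
Qed.

Lemma coprime_denq_div (n d : int) (p : nat) : d != 0 -> coprime `|d| p ->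
  coprime `|denq (n%:~R / d%:~R : rat)| p.
Proof.
by case: divqP => [|k x kn0 _]; rewrite ?eqxx // abszM coprimeMl => /andP[].
Qed.

Section PTorsion.
Variables (p : nat) (M : zmodType) (phi : rat -> M).
Hypotheses (p_prime : prime p) (phiD : forall q r, phi (q + r) = phi q + phi r)
  (phi0 : forall q, phi q = 0 <-> coprime `|denq q|%N p)
  (phi_onto : forall m : M, (exists n, m *+ (p ^ n) = 0) <-> (exists q, phi q = m)).

Let p_neq0 : (p%:R : rat) != 0.
Proof. by rewrite pnatr_eq0 -lt0n prime_gt0. Qed.

Lemma phi_int (k : int) : phi k%:~R = 0.
Proof. by apply/phi0; rewrite denq_int coprime1n. Qed.

Lemma ptorsion_phi_int m : m *+ p = 0 -> exists k : int, m = phi (k%:~R / p%:R).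
Proof.
move=> mp; have [q qm] : exists q, phi q = m.
  by apply/phi_onto; exists 1%N; rewrite expn1.
set r := q *+ p; have /phi0 r_coprime : phi r = 0 by rewrite /r (additiveMn phiD) qm.
rewrite -qm.
have [u [v Bezout_r]] := Bezoutz (denq r) p.
have gcd_r : gcdz (denq r) p = 1 by rewrite /gcdz absz_nat (eqP r_coprime).
have dn0 : ((denq r)%:~R : rat) != 0 by rewrite intr_eq0 denq_neq0.
have Bezout_rat : 1 - u%:~R * (denq r)%:~R = v%:~R * p%:R :> rat.
  by apply/eqP; rewrite subr_eq pmulrn -!intrM -intrD addrC Bezout_r gcd_r.
(* for [r = n / d] and [u d + v p = 1], [q = n / (d p)] is [n u / p] up to a
   fraction of denominator [d] *)
have q_diff : q - (numq r * u)%:~R / p%:R = (numq r * v)%:~R / (denq r)%:~R.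
  have -> : q = (numq r)%:~R / (denq r)%:~R / p%:R.
    by rewrite divq_num_den /r -[q *+ p]mulr_natr mulfK.
  rewrite !intrM.
  have -> : (numq r)%:~R * v%:~R / (denq r)%:~R =
      (numq r)%:~R * (v%:~R * p%:R) / ((denq r)%:~R * p%:R) :> rat.
    by field; rewrite dn0 p_neq0.
  by rewrite -Bezout_rat; field; rewrite dn0 p_neq0.
exists (numq r * u); apply/eqP; rewrite -subr_eq0 -(additiveB phiD) q_diff.
by apply/eqP/phi0/coprime_denq_div; rewrite ?denq_neq0.
Qed.

Lemma ptorsion_phi m :
  m *+ p = 0 -> exists2 i, (i < p)%N & m = phi (i%:R / p%:R).
Proof.
have p_gt0 : (0 < p%:Z) by rewrite ltz_nat prime_gt0.
move=> /ptorsion_phi_int[k ->].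
have [i k_mod] : exists i : nat, (k %% p)%Z = i.
  by exists `|(k %% p)%Z|%N; rewrite gez0_abs // modz_ge0 // lt0r_neq0.
exists i; first by rewrite -ltz_nat -k_mod ltz_pmod.
rewrite {1}(divz_eq k p) k_mod intrD intrM mulrDl mulfK ?phiD ?phi_int ?add0r //.
Qed.

(* iota embeds the p elements of Z/p into M[p] = phi((1/p)Z), which has at most p. *)
Lemma ptorsion_iota (iota : 'Z_p -> M) :
    (forall x y, iota (x + y) = iota x + iota y) -> injective iota ->
  forall m, m *+ p = 0 -> exists z, iota z = m.
Proof.
move=> iotaD iota_inj m /ptorsion_phi[i ip ->].
set S := mkseq (fun i => phi (i%:R / p%:R)) p.
have iota_S : {subset map iota (enum 'Z_p) <= S}.
  move=> _ /mapP[z _ ->].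
  have [j jp ->] := ptorsion_phi (additive_Zp_ptorsion (prime_gt1 p_prime) iotaD z).
  by apply/map_f; rewrite mem_iota.
have uniq_iota : uniq (map iota (enum 'Z_p)) by rewrite map_inj_uniq ?enum_uniq.
have [|_ S_iota] := uniq_min_size uniq_iota iota_S.
  by rewrite size_mkseq size_map size_enum_ord Zp_cast ?prime_gt1.
have : phi (i%:R / p%:R) \in S by apply/map_f; rewrite mem_iota.
by rewrite -S_iota => /mapP[z _ ->]; exists z.
Qed.

Lemma ptorsion_fixed (G : Type) (theta : G -> nat -> nat) (act : G -> M -> M) :
    (forall g (k : int) (n : nat), act g (phi (k%:~R / (p ^ n)%:R)) =
       phi ((k * (theta g n)%:Z)%:~R / (p ^ n)%:R)) ->
    (forall g, theta g 1%N = 1%N) ->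
  forall g m, m *+ p = 0 -> act g m = m.
Proof.
move=> phi_act theta1 g m /ptorsion_phi_int[k ->].
by have := phi_act g k 1%N; rewrite expn1 theta1 mulr1.
Qed.

End PTorsion.

Definition gpow (G : topologicalType) (Gm : profinite_group G) (x : G) (n : nat) : G :=
  iter n (gmul Gm x) (gone Gm).

Section NormCocycle.
Variables (p : nat) (G : topologicalType) (Gm : profinite_group G).
Variables (M : zmodType) (act : G -> M -> M).
Hypotheses (p_prime : prime p)
  (actD : forall g x y, act g (x + y) = act g x + act g y)
  (act1 : forall x, act (gone Gm) x = x)
  (actM : forall g h x, act (gmul Gm g h) x = act g (act h x)).
Variable xi : G -> 'Z_p.
Hypothesis xiM : forall g h, xi (gmul Gm g h) = xi g + xi h.

Let p_gt1 : (1 < p)%N. Proof. exact: prime_gt1. Qed.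
Let Zp_lt (x : 'Z_p) : (x < p)%N. Proof. by rewrite -[p in (_ < p)%N]Zp_cast ?ltn_ord. Qed.

Lemma xi1 : xi (gone Gm) = 0.
Proof. by apply: (@addrI _ (xi (gone Gm))); rewrite -xiM gmul1 addr0. Qed.

Lemma xiV g : xi (ginv Gm g) = - xi g.
Proof. by apply: (@addrI _ (xi g)); rewrite -xiM gmulV xi1 subrr. Qed.

Lemma xi_gpow g n : xi (gpow Gm g n) = xi g *+ n.
Proof. by elim: n => [|n IH]; rewrite ?xi1 // mulrS -IH -xiM. Qed.

Lemma exists_xi_eq1 : (exists g, xi g != 0) -> exists s, xi s = 1.
Proof.
case=> g xig0; exists (gpow Gm g (xi g)^-1); rewrite xi_gpow -mulr_natr natr_Zp mulrV //.
have xig_gt0 : (0 < xi g)%N.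
  by rewrite lt0n; apply: contra xig0 => /eqP xi0; apply/eqP/val_inj.
rewrite -(natr_Zp (xi g)) unitZpE // prime_coprime //.
by apply/negP=> /(dvdn_leq xig_gt0); rewrite leqNgt Zp_lt.
Qed.

Lemma gpow_coset_reps s : xi s = 1 ->
  forall g, exists! i : 'I_p, xi (gmul Gm (ginv Gm (gpow Gm s i)) g) = 0.
Proof.
move=> xis g.
have xi_coset (i : nat) : xi (gmul Gm (ginv Gm (gpow Gm s i)) g) = xi g - i%:R.
  by rewrite xiM xiV xi_gpow xis addrC.
exists (Ordinal (Zp_lt (xi g))); split=> [|j]; first by rewrite xi_coset natr_Zp subrr.
rewrite xi_coset => /eqP; rewrite subr_eq0 => /eqP /(congr1 val) xig.
by apply/val_inj; rewrite /= xig; have := val_Zp_nat p_gt1 j; rewrite modn_small.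
Qed.

Variable b : M.

Definition carry (x y : 'Z_p) : nat := ((x + y) %/ p)%N.

Definition norm_cocycle (E : G -> M) : Prop :=
  forall g h, E (gmul Gm g h) + b *+ carry (xi g) (xi h) = act g (E h) + E g.

Lemma carry0l x : carry 0 x = 0%N.
Proof. exact: divn_small (Zp_lt x). Qed.

Lemma carry0r x : carry x 0 = 0%N.
Proof. by rewrite /carry addn0; exact: divn_small (Zp_lt x). Qed.

Lemma carry_natr i j :
  (i < p)%N -> (j < p)%N -> carry i%:R j%:R = ((i + j) %/ p)%N.
Proof. by move=> ip jp; rewrite /carry !val_Zp_nat // !modn_small. Qed.

Lemma norm_cocycle_ker E : norm_cocycle E ->
  forall g h, xi g = 0 -> E (gmul Gm g h) = E g + act g (E h).
Proof. by move=> E_coc g h xig; have := E_coc g h; rewrite xig carry0l addr0 addrC. Qed.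

Lemma norm_cocycle_sub_coboundary E m : norm_cocycle E ->
  norm_cocycle (fun g => E g - (act g m - m)).
Proof.
move=> E_coc g h; rewrite !(additiveB (actD g)) actM addrAC E_coc !opprB.
by rewrite [RHS]addrACA; congr (_ + _); rewrite addrC addrA subrK.
Qed.

Section Norm.
Variables (E : G -> M) (s : G).
Hypotheses (E_coc : norm_cocycle E) (E_ker : forall g, xi g = 0 -> E g = 0)
  (xis : xi s = 1).

Let xi_gpow_s i : xi (gpow Gm s i) = i%:R.
Proof. by rewrite xi_gpow xis. Qed.

Let xis_natr : xi s = 1%:R. Proof. exact: xis. Qed.

Let act_sum_gpow i : act s (\sum_(j < i) act (gpow Gm s j) (E s)) + E s =
  \sum_(j < i.+1) act (gpow Gm s j) (E s).
Proof.
rewrite big_ord_recl /= act1 addrC (additive_sum (actD s)).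
by congr (_ + _); apply: eq_bigr => j _; rewrite -actM.
Qed.

Lemma norm_cocycle_gpow i : (i < p)%N ->
  E (gpow Gm s i) = \sum_(j < i) act (gpow Gm s j) (E s).
Proof.
elim: i => [_|i IH ilt]; first by rewrite big_ord0 E_ker ?xi_gpow_s.
have := E_coc s (gpow Gm s i).
rewrite xis_natr xi_gpow_s carry_natr ?(ltnW ilt) // divn_small // mulr0n addr0.
by move=> ->; rewrite IH ?(ltnW ilt).
Qed.

Lemma norm_cocycle_norm : \sum_(j < p) act (gpow Gm s j) (E s) = b.
Proof.
have p_pred : p.-1.+1 = p by rewrite prednK ?prime_gt0.
have pred_lt : (p.-1 < p)%N by rewrite -[X in (_ < X)%N]p_pred.
have := E_coc s (gpow Gm s p.-1).
rewrite xis_natr xi_gpow_s carry_natr // add1n p_pred divnn prime_gt0 //.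
have -> : gmul Gm s (gpow Gm s p.-1) = gpow Gm s p by rewrite -[in RHS]p_pred.
rewrite (norm_cocycle_gpow pred_lt) act_sum_gpow p_pred /= mulr1n => <-.
by rewrite E_ker ?add0r // xi_gpow_s pchar_Zp.
Qed.

Lemma norm_cocycle_fixed h : xi h = 0 -> act h (E s) = E s.
Proof.
move=> xih; set t := gmul Gm (ginv Gm s) (gmul Gm h s).
have xit : xi t = 0 by rewrite !xiM xiV xih xis add0r addNr.
have := E_coc h s; rewrite xih carry0l (E_ker xih) !addr0 => <-.
have := E_coc s t; rewrite xit carry0r (E_ker xit) (additive0 (actD s)) addr0 add0r.
by rewrite /t gmulA gmulV g1mul.
Qed.

End Norm.

End NormCocycle.

Lemma continuous_gmull (G : topologicalType) (Gm : profinite_group G) (x : G) :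
  continuous (gmul Gm x).
Proof.
move=> h; apply: (@continuous2_cvg _ _ _ _ _ _ (fun _ => x) id (gmul Gm) x h).
- exact: (@gmul_cont _ Gm (x, h)).
- exact: cvg_cst.
- exact: cvg_id.
Qed.

Section LocallyConst.
Variables (G : topologicalType) (H : set G).

Lemma locally_const_on2 (T1 T2 T3 : Type) (f1 : G -> T1) (f2 : G -> T2)
    (F : T1 -> T2 -> T3) :
  locally_const_on H f1 -> locally_const_on H f2 ->
  locally_const_on H (fun g => F (f1 g) (f2 g)).
Proof.
move=> f1_lc f2_lc g Hg.
have [U1 [oU1 U1g f1U1]] := f1_lc g Hg; have [U2 [oU2 U2g f2U2]] := f2_lc g Hg.
by exists (U1 `&` U2); split=> [||h [U1h U2h] Hh]; rewrite ?f1U1 ?f2U2 //; exact: openI.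
Qed.

Lemma locally_const_onT (T : Type) (f : G -> T) :
  locally_const_on [set: G] f -> locally_const_on H f.
Proof.
move=> f_lc g _; have [U [oU Ug fU]] := f_lc g I.
by exists U; split=> // h Uh _; exact: fU.
Qed.

End LocallyConst.

Section ConnectingMap.
Variables (p : nat) (G : topologicalType) (Gm : profinite_group G).
Variables (theta : G -> nat -> nat) (M : zmodType) (act : G -> M -> M).
Variable iota : 'Z_p -> M.
Hypotheses (p_prime : prime p) (cyc : cyclotomic_orientation Gm p theta)
  (H90 : hilbert90_module Gm p theta act)
  (iotaD : forall x y, iota (x + y) = iota x + iota y) (iota_inj : injective iota).

Let actD g x y : act g (x + y) = act g x + act g y.
Proof. by case: H90 => [[]]. Qed.
Let act1 x : act (gone Gm) x = x.
Proof. by case: H90 => [[]]. Qed.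
Let actM g h x : act (gmul Gm g h) x = act g (act h x).
Proof. by case: H90 => [[]]. Qed.
Let act_open x : open [set g | act g x = x].
Proof. by case: H90 => [[]]. Qed.

Let ptorsion_in_iota m : m *+ p = 0 -> exists z, iota z = m.
Proof. by case: H90 => _ _ [phi [phiD phi0 phi_onto _]] _; exact: ptorsion_iota. Qed.
Let act_ptorsion g m : m *+ p = 0 -> act g m = m.
Proof.
case: H90 cyc => _ _ [phi [phiD phi0 phi_onto phi_act]] _ [_ theta1].
exact: ptorsion_fixed phi_act theta1 g m.
Qed.

Let iota_ptorsion := additive_Zp_ptorsion (prime_gt1 p_prime) iotaD.

Section Root.
Variables (a c : M).
Hypotheses (a_fixed : forall g, act g a = a) (c_root : c *+ p = a).

Local Notation chi_a := (chi act iota a).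

Lemma chiE g : iota (chi_a g) = act g c - c.
Proof.
have gc_torsion c' : c' *+ p = a -> (act g c' - c') *+ p = 0.
  by move=> c'a; rewrite mulrnBl -(additiveMn (actD g)) c'a a_fixed subrr.
have [z iota_z] := ptorsion_in_iota (gc_torsion c c_root).
have [c' [c'a ->]] : exists c', c' *+ p = a /\ iota (chi_a g) = act g c' - c'.
  by apply: (epsilon_spec (inhabits (0 : 'Z_p))
    (fun z => exists c, c *+ p = a /\ iota z = act g c - c)); exists z, c.
(* two p-th roots of [a] differ by p-torsion, on which [G] acts trivially *)
have /(act_ptorsion g) : (c' - c) *+ p = 0 by rewrite mulrnBl c'a c_root subrr.
rewrite (additiveB (actD g)) => /(canRL (subrK _)) ->.
by rewrite addrAC [c' - c - c']addrAC subrr add0r addrC.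
Qed.

Lemma chiM g h : chi_a (gmul Gm g h) = chi_a g + chi_a h.
Proof.
apply: iota_inj; rewrite iotaD !chiE actM.
have := act_ptorsion g (iota_ptorsion (chi_a h)).
rewrite chiE (additiveB (actD g)) => /(canRL (subrK _)) ->.
by rewrite -addrA addrC.
Qed.

Lemma chi_locally_const : locally_const_on [set: G] chi_a.
Proof.
move=> g _; exists (gmul Gm (ginv Gm g) @^-1` [set h | act h c = c]); split.
- by apply: open_comp => [h _|]; [exact: continuous_gmull | exact: act_open].
- by rewrite /= gVmul act1.
- move=> h /= hc _; apply: iota_inj; rewrite !chiE.
  by rewrite -[h in LHS](g1mul Gm) -(gmulV Gm g) -gmulA actM hc.
Qed.

Lemma ker_chi_open_subgroup : open_subgroup Gm (ker_chi act iota a).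
Proof.
have ker_chiE : ker_chi act iota a = [set g | act g c = c].
  apply/seteqP; split=> g /=; rewrite /ker_chi /=.
    by move/(congr1 iota); rewrite chiE (additive0 iotaD) => /subr0_eq.
  by move=> gc; apply: iota_inj; rewrite chiE gc subrr (additive0 iotaD).
rewrite ker_chiE; split=> [|/=|g h /= gc hc|g /= gc]; first exact: act_open.
- by rewrite act1.
- by rewrite actM hc gc.
- by rewrite -{1}gc -actM gVmul act1.
Qed.

End Root.

Section NormCochain.
Variables (a b c d : M) (f : G -> 'Z_p).
Hypotheses (a_fixed : forall g, act g a = a) (c_root : c *+ p = a)
  (b_fixed : forall g, act g b = b) (d_root : d *+ p = b)
  (f_lc : locally_const_on [set: G] f)
  (f_cup : forall g h, chi act iota a g * chi act iota b h = f g + f h - f (gmul Gm g h)).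

Local Notation chi_a := (chi act iota a).
Local Notation chi_b := (chi act iota b).

Definition norm_cochain (g : G) : M :=
  d *+ chi_a g + iota (chi_a g * chi_b g + f g).

Lemma norm_cochain_cocycle : norm_cocycle Gm act chi_a b norm_cochain.
Proof.
move=> g h; rewrite /norm_cochain.
have -> : chi_a (gmul Gm g h) * chi_b (gmul Gm g h) + f (gmul Gm g h) =
    chi_b g * chi_a h + (chi_a h * chi_b h + f h) + (chi_a g * chi_b g + f g).
  have -> : f (gmul Gm g h) = f g + f h - chi_a g * chi_b h by rewrite f_cup; ring.
  by rewrite !(chiM a_fixed c_root) !(chiM b_fixed d_root); ring.
have act_d : act g (d *+ chi_a h) = iota (chi_b g * chi_a h) + d *+ chi_a h.
  rewrite (additiveMn (actD g)) -[act g d](subrK d) -(chiE b_fixed d_root) mulrnDl.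
  by rewrite -(additiveMn iotaD) -mulr_natr natr_Zp.
have carry_d : d *+ chi_a (gmul Gm g h) + b *+ carry (chi_a g) (chi_a h) =
    d *+ chi_a h + d *+ chi_a g.
  rewrite -d_root -mulrnA -!mulrnDr (chiM a_fixed c_root) /carry.
  have -> : nat_of_ord (chi_a g + chi_a h)%R = ((chi_a g + chi_a h) %% p)%N.
    rewrite -[in LHS](natr_Zp (chi_a g)) -[in LHS](natr_Zp (chi_a h)).
    by rewrite -natrD val_Zp_nat // prime_gt1.
  by rewrite mulnC addnC -divn_eq addnC.
rewrite actD act_d (act_ptorsion g (iota_ptorsion _)) !iotaD addrAC carry_d.
by rewrite addrACA; congr (_ + _); rewrite addrA [d *+ _ + _]addrC.
Qed.

Lemma norm_cochain_locally_const : locally_const_on [set: G] norm_cochain.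
Proof.
have chi_a_lc := chi_locally_const a_fixed c_root.
have chi_b_lc := chi_locally_const b_fixed d_root.
rewrite /norm_cochain.
apply: (locally_const_on2 (fun (x y : 'Z_p) => d *+ x + iota y) chi_a_lc).
apply: (locally_const_on2 (fun x y => x + y) _ f_lc).
exact: (locally_const_on2 (fun x y => x * y) chi_a_lc chi_b_lc).
Qed.

End NormCochain.

End ConnectingMap.

Lemma norm_equals_id (G : topologicalType) (Gm : profinite_group G) (M : zmodType)
    (act : G -> M -> M) (K : set G) (b : M) :
  (forall x, act (gone Gm) x = x) -> (forall g, K g) -> norm_equals Gm act K b b.
Proof.
move=> act1 K_all; exists 1%N, (fun _ => gone Gm); split; last by rewrite big_ord1 act1.
by move=> g; exists ord0; split=> // i _; rewrite (ord1 i).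
Qed.

Theorem corollary3p3 (p : nat) (G : topologicalType) (Gm : profinite_group G)
    (theta : G -> nat -> nat) (M : zmodType) (act : G -> M -> M)
    (iota : 'Z_p -> M) :
  prime p ->
  cyclotomic_orientation Gm p theta ->
  hilbert90_module Gm p theta act ->
  (forall x y, iota (x + y) = iota x + iota y) ->
  injective iota ->
  forall a b : M,
    (forall g, act g a = a) ->
    (forall g, act g b = b) ->
    cup_vanishes Gm (chi act iota a) (chi act iota b) ->
    exists alpha : M,
      (forall g, ker_chi act iota a g -> act g alpha = alpha) /\
      norm_equals Gm act (ker_chi act iota a) alpha b.
Proof.
move=> p_prime cyc H90 iotaD iota_inj a b a_fixed b_fixed [f [f_lc f_cup]].
have [[actD act1 actM _] root _ H1] := H90.
have [c c_root] := root a; have [d d_root] := root b.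
have chi_aM := chiM p_prime cyc H90 iotaD iota_inj a_fixed c_root.
set K := ker_chi act iota a; set E := norm_cochain act iota a b d f.
have E_coc : norm_cocycle Gm act (chi act iota a) b E := norm_cochain_cocycle
  p_prime cyc H90 iotaD iota_inj a_fixed c_root b_fixed d_root f_cup.
have E_lc : locally_const_on K E := locally_const_onT (norm_cochain_locally_const
  p_prime cyc H90 iotaD iota_inj a_fixed c_root b_fixed d_root f_lc).
have K_open := ker_chi_open_subgroup p_prime cyc H90 iotaD iota_inj a_fixed c_root.
have [m E_cobound] :=
  H1 K K_open E E_lc (fun g h Kg _ => norm_cocycle_ker p_prime E_coc h Kg).
pose E' g := E g - (act g m - m).
have E'_coc : norm_cocycle Gm act (chi act iota a) b E' :=
  norm_cocycle_sub_coboundary actD actM m E_coc.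
have E'_ker g : K g -> E' g = 0 by move=> Kg; rewrite /E' E_cobound // subrr.
have [[g0 chi_g0]|chi_a0] := pselect (exists g, chi act iota a g != 0).
  have [s chi_s] := exists_xi_eq1 p_prime chi_aM (ex_intro _ g0 chi_g0).
  exists (E' s); split; first exact: norm_cocycle_fixed.
  exists p, (fun i : 'I_p => gpow Gm s i); split; first exact: gpow_coset_reps.
  exact: norm_cocycle_norm.
exists b; split=> [g _|]; first exact: b_fixed.
apply: norm_equals_id => // g.
by apply: contra_notP chi_a0 => chi_g; exists g; apply/eqP.
Qed.
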